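(* Let $q$ be a power of an odd prime and $d\ge 3$ an integer. Any set $A\subset\mathbb{F}_q$ with $|A|\gg q^{1/2}$ has $\gg |A|^d$ square-sum-type tuples, i.e. tuples $(x_1,\dots,x_d)\in A^d$ such that $x_1^2+\cdots+x_d^2$ is a square in $\mathbb{F}_q$.
   Context: An element $t\in\mathbb{F}_q$ is a square if $t=u^2$ for some $u\in\mathbb{F}_q$. $X\ll Y$ means $X\le CY$ for a constant $C>0$ independent of $q$ and $A$ (the hypothesis $|A|\gg q^{1/2}$ means $|A|\ge c\,q^{1/2}$ for a suitable such constant $c$). *)

From HB Require Import structures.
From mathcomp Require Import all_boot all_order all_algebra all_field.
Set Implicit Arguments. Unset Strict Implicit. Unset Printing Implicit Defensive.
Import GRing.Theory.
Local Open Scope ring_scope.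

Definition is_square (F : finFieldType) (t : F) : bool :=
  [exists u : F, t == u ^+ 2].

Definition square_sum_tuples (F : finFieldType) (A : {set F}) (d : nat)
  : {set d.-tuple F} :=
  [set x : d.-tuple F | all (fun a => a \in A) x
                        & is_square (\sum_(i < d) (tnth x i) ^+ 2)].

From Stdlib Require Import Reals Lra.
From HB Require Import structures.
From mathcomp Require Import all_boot all_order all_algebra all_field.
From mathcomp Require Import ring zify.

(* Let chi be the quadratic character of F, N = #|A| and q = #|F|.  Since
   2 [s is a square] >= 1 + chi s, twice the number of square-sum tuples is at
   least N ^ d + E, where E is the sum of chi (y_1^2 + ... + y_d^2) over A ^ d.
   Splitting off the last coordinate, E = sum_t G t * r t, where G t counts the
   tuples of A ^ (d - 1) whose squares sum to t and r t = sum_(x in A) chi (t + x^2).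
   By Cauchy-Schwarz E^2 <= (sum G^2) (sum r^2).  Each value of G is at most
   2 N ^ (d - 2) and G sums to N ^ (d - 1); expanding sum r^2 gives the
   correlations sum_t chi (t + a) chi (t + b), which equal -1 for a <> b, so
   sum r^2 <= 2 q N.  Hence E^2 <= 4 q N ^ (2d - 2) <= N ^ (2d) / 4 as soon as
   N^2 >= 16 q, and there are at least N ^ d / 4 square-sum tuples. *)

Set Implicit Arguments. Unset Strict Implicit. Unset Printing Implicit Defensive.
Import Order.TTheory GRing.Theory Num.Theory.
Local Open Scope ring_scope.

Lemma CauchySchwarz_sum (R : realDomainType) (I : finType) (f g : I -> R) :
  (\sum_i f i * g i) ^+ 2 <= (\sum_i f i ^+ 2) * (\sum_i g i ^+ 2).
Proof.
set Sff := \sum_i f i ^+ 2; set Sfg := \sum_i f i * g i; set Sgg := \sum_i g i ^+ 2.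
have Sff_ge0 : 0 <= Sff by apply: sumr_ge0 => i _; apply: sqr_ge0.
have sum_sqr_eq : \sum_i (Sff * g i - Sfg * f i) ^+ 2 = Sff * (Sff * Sgg - Sfg ^+ 2).
  transitivity (\sum_i (Sff ^+ 2 * g i ^+ 2 - 2 * Sff * Sfg * (f i * g i)
                        + Sfg ^+ 2 * f i ^+ 2)).
    by apply: eq_bigr => i _; ring.
  rewrite big_split sumrB /= -!mulr_sumr -/Sff -/Sfg -/Sgg; ring.
have : 0 <= Sff * (Sff * Sgg - Sfg ^+ 2).
  by rewrite -sum_sqr_eq; apply: sumr_ge0 => i _; apply: sqr_ge0.
have [Sff0 _ | Sff_neq0] := eqVneq Sff 0; last first.
  by rewrite pmulr_rge0 ?subr_ge0 // lt_def Sff_neq0.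
have f0 i : f i = 0.
  move/eqP: Sff0; rewrite psumr_eq0 => [/allP/(_ i (mem_index_enum i))|j _].
    by rewrite /= sqrf_eq0 => /eqP.
  exact: sqr_ge0.
have -> : Sfg = 0 by rewrite /Sfg big1 // => i _; rewrite f0 mul0r.
by rewrite Sff0 mul0r expr0n.
Qed.

Lemma sum_sqr_eq_le2 (F : finFieldType) (A : {set F}) (a : F) :
  (\sum_(x in A) (x ^+ 2 == a) <= 2)%N.
Proof.
rewrite (eq_bigr (fun x => if x ^+ 2 == a then 1 else 0)%N) => [|x _]; last by case: eqP.
rewrite -big_mkcondr sum1dep_card.
have [u /eqP <- | no_root] := pickP [pred x : F | x ^+ 2 == a]; last first.
  by rewrite eq_card0 // => x; rewrite !inE [_ == a]no_root andbF.
apply: (@leq_trans #|[set u; - u]|); last by rewrite cards2; case: (u != - u).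
by apply/subset_leq_card/subsetP => x; rewrite !inE eqf_sqr => /andP[].
Qed.

Section QuadraticCharacter.
Variable F : finFieldType.
Hypothesis oddF : odd #|F|.

Lemma is_squareP (x : F) : reflect (exists u, x = u ^+ 2) (is_square x).
Proof. by apply: (iffP existsP) => -[u /eqP]; exists u => //; apply/eqP. Qed.

Lemma is_square_sqr (u : F) : is_square (u ^+ 2).
Proof. by apply/is_squareP; exists u. Qed.

Lemma is_square0 : is_square (0 : F).
Proof. by apply/is_squareP; exists 0; rewrite expr0n. Qed.

Lemma is_squareM (x y : F) : is_square x -> is_square y -> is_square (x * y).
Proof. by move=> /is_squareP[u ->] /is_squareP[v ->]; rewrite -exprMn is_square_sqr. Qed.

Lemma two_neq0 : 2%:R != 0 :> F.
Proof.
apply/eqP => two0; have pchar2 : 2%N \in [pchar F] by rewrite inE /= two0 eqxx.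
move: oddF (finNzRing_gt1 F); rewrite (card_pprimeChar pchar2).
by case: logn => [|k] //; rewrite oddX.
Qed.

Lemma neq_oppr (u : F) : u != 0 -> u != - u.
Proof.
move=> u_neq0; rewrite -subr_eq0 opprK -mulr2n -mulr_natr.
by rewrite mulf_neq0 ?two_neq0.
Qed.

Definition nonzero_squares := [set x : F | (x != 0) && is_square x].
Definition nonsquares := [set x : F | ~~ is_square x].

Lemma card_nonzero_squares : (2 * #|nonzero_squares|)%N = #|F|.-1.
Proof.
rewrite -(cardC1 0) -[RHS]sum1_card mulnC -sum_nat_const.
rewrite [RHS](partition_big (fun x : F => x ^+ 2) (mem nonzero_squares)) => [|x]; last first.
  by rewrite !inE expf_eq0 /= is_square_sqr andbT.
apply: eq_bigr => s /setIdP[s_neq0 /is_squareP[u def_s]].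
have u_neq0 : u != 0 by apply: contraNneq s_neq0 => u0; rewrite def_s u0 expr0n.
transitivity #|[set u; - u]|; first by rewrite cards2 neq_oppr.
rewrite sum1_card; apply: eq_card => x.
rewrite in_set2 -eqf_sqr -def_s [RHS]unfold_in /= inE andb_idl // => /eqP sqr_xs.
by apply: contraNneq s_neq0 => x0; rewrite -sqr_xs x0 expr0n.
Qed.

Lemma card_nonsquares : #|nonsquares| = #|nonzero_squares|.
Proof.
have card_split : #|F| = (#|nonsquares| + (#|nonzero_squares|).+1)%N.
  rewrite -(cardsC nonsquares); congr (_ + _)%N.
  have -> : ~: nonsquares = 0 |: nonzero_squares.
    by apply/setP => x; rewrite !inE negbK; case: eqVneq => [->|]; rewrite ?is_square0.
  by rewrite cardsU1 !inE eqxx.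
by have := card_nonzero_squares; rewrite card_split addnS /= mul2n -addnn => /addIn.
Qed.

Lemma nonsquare_neq0 (x : F) : ~~ is_square x -> x != 0.
Proof. by apply: contraNneq => ->; apply: is_square0. Qed.

Lemma nonsquareMl (x y : F) :
  x != 0 -> is_square x -> ~~ is_square y -> ~~ is_square (x * y).
Proof.
move=> x_neq0 /is_squareP[u def_x]; apply: contra => /is_squareP[v def_xy].
by apply/is_squareP; exists (v / u); rewrite expr_div_n -def_xy -def_x mulrC mulKf.
Qed.

(* Multiplication by a nonsquare maps the nonzero squares injectively, hence,
   the two sets having the same size, onto the nonsquares. *)
Lemma is_square_mul_nonsquares (x y : F) :
  ~~ is_square x -> ~~ is_square y -> is_square (x * y).
Proof.
move=> x_nsq y_nsq; have x_neq0 := nonsquare_neq0 x_nsq.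
have /eqP mulx_onto : [set x * s | s in nonzero_squares] == nonsquares.
  rewrite eqEcard card_imset ?card_nonsquares ?leqnn ?andbT; last exact: mulfI.
  apply/subsetP => _ /imsetP[s /setIdP[s_neq0 s_sq] ->].
  by rewrite inE mulrC nonsquareMl.
have : y \in nonsquares by rewrite inE.
rewrite -mulx_onto => /imsetP[s /setIdP[_ s_sq] ->].
by rewrite mulrA -expr2 is_squareM ?is_square_sqr.
Qed.

Definition qchar (x : F) : int :=
  if x == 0 then 0 else if is_square x then 1 else -1.

Lemma qchar0 : qchar 0 = 0.
Proof. by rewrite /qchar eqxx. Qed.

Lemma qchar_sqr (u : F) : u != 0 -> qchar (u ^+ 2) = 1.
Proof. by move=> u_neq0; rewrite /qchar expf_eq0 (negPf u_neq0) is_square_sqr. Qed.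

Lemma qchar1 : qchar 1 = 1.
Proof. by rewrite -(expr1n F 2) qchar_sqr ?oner_neq0. Qed.

Lemma qcharM (x y : F) : qchar (x * y) = qchar x * qchar y.
Proof.
rewrite /qchar mulf_eq0.
have [-> | x_neq0] := eqVneq x 0; first by rewrite /= mul0r.
have [-> | y_neq0] := eqVneq y 0; first by rewrite /= mulr0.
case x_sq: (is_square x); case y_sq: (is_square y) => /=.
- by rewrite is_squareM.
- by rewrite (negPf (nonsquareMl x_neq0 x_sq (negbT y_sq))).
- by rewrite mulrC (negPf (nonsquareMl y_neq0 y_sq (negbT x_sq))).
- by rewrite is_square_mul_nonsquares ?x_sq ?y_sq.
Qed.

Lemma qchar_sqr_le1 (x : F) : qchar x ^+ 2 <= 1.
Proof. by rewrite /qchar; case: (x == 0); case: (is_square x). Qed.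

Lemma qchar_nonsquare (x : F) : ~~ is_square x -> qchar x = -1.
Proof. by move=> x_nsq; rewrite /qchar (negPf (nonsquare_neq0 x_nsq)) (negPf x_nsq). Qed.

Lemma exists_nonsquare : exists a : F, ~~ is_square a.
Proof.
have : (0 < #|nonsquares|)%N.
  rewrite card_nonsquares -(ltn_pmul2l (isT : 0 < 2)%N) card_nonzero_squares.
  by rewrite -ltnS prednK ?finNzRing_gt1 // (ltn_trans _ (finNzRing_gt1 F)).
by case/card_gt0P => a; rewrite inE; exists a.
Qed.

(* Scaling by a nonsquare permutes F and flips the sign of every term. *)
Lemma sum_qchar : \sum_x qchar x = 0.
Proof.
have [a a_nsq] := exists_nonsquare.
have : \sum_x qchar x = - \sum_x qchar x.
  rewrite {1}(reindex_inj (mulfI (nonsquare_neq0 a_nsq))) -sumrN.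
  by apply: eq_bigr => x _; rewrite qcharM qchar_nonsquare // mulN1r.
by move/eqP; rewrite -subr_eq0 opprK -mulr2n mulrn_eq0 => /eqP.
Qed.

Lemma sum_qchar_shift_mul (a b : F) :
  a != b -> \sum_t qchar (t + a) * qchar (t + b) = -1.
Proof.
move=> neq_ab; have ab_neq0 : a - b != 0 by rewrite subr_eq0.
(* [phi] permutes F (recall [0^-1 = 0]), and [phi t * (t + b) ^+ 2 = (t + a) * (t + b)]. *)
pose phi t := 1 + (a - b) * (t + b)^-1.
have phi_inj : injective phi by move=> t1 t2 /addrI/(mulfI ab_neq0)/invr_inj/addIr.
have qchar_phi t : qchar (t + a) * qchar (t + b) = qchar (phi t) - (t == - b)%:R.
  have [-> | tb_neq] := eqVneq t (- b).
    by rewrite addNr qchar0 mulr0 /phi addNr invr0 mulr0 addr0 qchar1 subrr.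
  have tb_neq0 : t + b != 0 by rewrite addr_eq0.
  rewrite subr0 -qcharM -[qchar (phi t)]mulr1 -(qchar_sqr tb_neq0) -qcharM.
  by congr qchar; rewrite /phi; field.
rewrite (eq_bigr _ (fun t _ => qchar_phi t)) sumrB.
rewrite -(reindex_inj (P := xpredT) (F := qchar) phi_inj) sum_qchar.
by rewrite sub0r (bigD1 (- b)) //= eqxx big1 ?addr0 // => t /negPf ->; rewrite mulr0n.
Qed.

Lemma sum_qchar_shift_mul_le (a b : F) :
  \sum_t qchar (t + a) * qchar (t + b) <= (a == b)%:R * #|F|%:R.
Proof.
have [<- | neq_ab] := eqVneq a b; last by rewrite sum_qchar_shift_mul // mul0r.
rewrite mul1r -sum1_card natr_sum.
by apply: ler_sum => t _; rewrite -expr2 qchar_sqr_le1.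
Qed.

End QuadraticCharacter.

Lemma big_tuple_cons (R : nmodType) (T : finType) (n : nat) (h : n.+1.-tuple T -> R) :
  \sum_y h y = \sum_x \sum_(z : n.-tuple T) h [tuple of x :: z].
Proof.
rewrite pair_big (reindex (fun p : T * n.-tuple T => [tuple of p.1 :: p.2])) /=.
  by apply: eq_bigr => -[x z].
exists (fun y : n.+1.-tuple T => (thead y, [tuple of behead y])) => [[x z] _ | y _].
  by congr pair; apply: val_inj.
exact/esym/tuple_eta.
Qed.

Section SquareSumRepresentations.
Variables (F : finFieldType) (A : {set F}).

Fixpoint sqr_reps (n : nat) (t : F) : nat :=
  if n is n'.+1 then \sum_(x in A) sqr_reps n' (t - x ^+ 2)%R else (t == 0%R).

Lemma sum_sqr_repsS (n : nat) (w : F -> int) :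
  \sum_t (sqr_reps n.+1 t)%:R * w t
    = \sum_t (sqr_reps n t)%:R * \sum_(x in A) w (t + x ^+ 2).
Proof.
under eq_bigr do rewrite natr_sum mulr_suml.
under [RHS]eq_bigr do rewrite mulr_sumr.
rewrite exchange_big [RHS]exchange_big; apply: eq_bigr => x _ /=.
by rewrite (reindex_inj (addIr (x ^+ 2))); apply: eq_bigr => t _; rewrite addrK.
Qed.

Lemma sum_tuples_sqr_sum (n : nat) (w : F -> int) :
  \sum_(y : n.-tuple F | all (fun a => a \in A) y) w (\sum_(a <- y) a ^+ 2)
    = \sum_t (sqr_reps n t)%:R * w t.
Proof.
elim: n w => [|n IHn] w.
  rewrite (big_pred1 [tuple]) => [|y]; last by rewrite [y]tuple0; apply/esym/eqxx.
  by rewrite big_nil (bigD1 0) //= eqxx mul1r big1 ?addr0 // => t /negPf ->; rewrite mul0r.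
rewrite sum_sqr_repsS big_mkcond big_tuple_cons /=.
rewrite (bigID (mem A)) /= [X in _ + X]big1 ?addr0 => [|x /negPf xNA]; last first.
  by apply: big1 => z _; rewrite xNA.
under [RHS]eq_bigr do rewrite mulr_sumr.
rewrite [RHS]exchange_big; apply: eq_bigr => x xA /=.
rewrite -IHn [RHS]big_mkcond; apply: eq_bigr => z _.
by rewrite xA big_cons addrC.
Qed.

Lemma sum_sqr_reps (n : nat) : (\sum_t sqr_reps n t)%N = (#|A| ^ n)%N.
Proof.
elim: n => [|n IHn] /=; first by rewrite (bigD1 0) //= eqxx big1 // => t /negPf ->.
rewrite exchange_big expnS -IHn -sum_nat_const; apply: eq_bigr => x _.
by rewrite (reindex_inj (addIr (x ^+ 2))); apply: eq_bigr => t _; rewrite addrK.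
Qed.

Lemma sqr_repsS_le (n : nat) (t : F) : (sqr_reps n.+1 t <= 2 * #|A| ^ n)%N.
Proof.
elim: n t => [|n IHn] t; last first.
  rewrite -[sqr_reps _ t]/(\sum_(x in A) sqr_reps n.+1 (t - x ^+ 2)%R)%N.
  by rewrite expnS mulnCA -sum_nat_const; apply: leq_sum => x _; apply: IHn.
rewrite expn0 muln1 /=; under eq_bigr do rewrite subr_eq0 eq_sym.
exact: sum_sqr_eq_le2.
Qed.

End SquareSumRepresentations.

Lemma lerN_sqr (R : realDomainType) (x y : R) : 0 <= y -> x ^+ 2 <= y ^+ 2 -> - y <= x.
Proof.
move=> y_ge0 le_xy; apply: lerNnormlW.
by rewrite -(@ler_pXn2r _ 2) ?nnegrE ?normr_ge0 // real_normK ?num_real.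
Qed.

Section CharacterSumBound.
Variables (F : finFieldType) (A : {set F}) (n : nat).
Hypothesis oddF : odd #|F|.

Let N : int := #|A|%:R.
Let q : int := #|F|%:R.
Let reps t : int := (sqr_reps A n.+1 t)%:R.
Let shifted_sum t : int := \sum_(x in A) qchar (t + x ^+ 2).

Definition qchar_sqr_sum : int :=
  \sum_(y : n.+2.-tuple F | all (fun a => a \in A) y) qchar (\sum_(a <- y) a ^+ 2).

Lemma qchar_sqr_sum_split : qchar_sqr_sum = \sum_t reps t * shifted_sum t.
Proof. by rewrite /qchar_sqr_sum sum_tuples_sqr_sum sum_sqr_repsS. Qed.

Lemma sum_reps_sqr_le : \sum_t reps t ^+ 2 <= 2 * N ^+ n * N ^+ n.+1.
Proof.
have sum_reps : \sum_t reps t = N ^+ n.+1 by rewrite -natr_sum sum_sqr_reps natrX.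
rewrite -sum_reps mulr_sumr; apply: ler_sum => t _.
by rewrite expr2 ler_wpM2r // /reps /N -natrX -natrM ler_nat sqr_repsS_le.
Qed.

Lemma sum_shifted_sum_sqr_le : \sum_t shifted_sum t ^+ 2 <= q * (2 * N).
Proof.
have -> : \sum_t shifted_sum t ^+ 2
    = \sum_(x in A) \sum_(x' in A) \sum_t qchar (t + x ^+ 2) * qchar (t + x' ^+ 2).
  under eq_bigr do rewrite expr2 mulr_suml.
  under eq_bigr do under eq_bigr do rewrite mulr_sumr.
  by rewrite exchange_big; apply: eq_bigr => x _; rewrite exchange_big.
apply: (@le_trans _ _ (\sum_(x in A) \sum_(x' in A) (x ^+ 2 == x' ^+ 2)%:R * q)).
  by do 2!(apply: ler_sum => ? _); apply: sum_qchar_shift_mul_le.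
apply: (@le_trans _ _ (\sum_(x in A) q * 2)); last first.
  by rewrite sumr_const -[_ *+ #|A|]mulr_natr -mulrA.
apply: ler_sum => x _; rewrite -mulr_suml mulrC ler_wpM2l ?ler0n //.
rewrite -natr_sum ler_nat; under eq_bigr do rewrite eq_sym.
exact: sum_sqr_eq_le2.
Qed.

Lemma qchar_sqr_sum_sqr_le : qchar_sqr_sum ^+ 2 <= 4 * q * (N ^+ n.+1) ^+ 2.
Proof.
rewrite qchar_sqr_sum_split; apply: le_trans (CauchySchwarz_sum reps shifted_sum) _.
have sum_sqr_ge0 (f : F -> int) : 0 <= \sum_t f t ^+ 2.
  by apply: sumr_ge0 => t _; apply: sqr_ge0.
have := ler_pM (sum_sqr_ge0 _) (sum_sqr_ge0 _) sum_reps_sqr_le sum_shifted_sum_sqr_le.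
move/le_trans; apply.
by rewrite exprS le_eqVlt; apply/predU1P; left; ring.
Qed.

Lemma card_square_sum_tuples_sum :
  (#|square_sum_tuples A n.+2|)%:R
    = \sum_(y : n.+2.-tuple F | all (fun a => a \in A) y)
        (is_square (\sum_(a <- y) a ^+ 2))%:R :> int.
Proof.
rewrite -sum1_card natr_sum big_mkcond [RHS]big_mkcond /=; apply: eq_bigr => y _.
by rewrite inE big_tuple; case: (all _ _); case: (is_square _).
Qed.

Lemma card_square_sum_tuples_ge_qchar :
  N ^+ n.+2 + qchar_sqr_sum <= 2 * (#|square_sum_tuples A n.+2|)%:R.
Proof.
have -> : N ^+ n.+2 = \sum_(y : n.+2.-tuple F | all (fun a => a \in A) y) 1.
  rewrite (sum_tuples_sqr_sum _ _ (fun=> 1)) -natrX -sum_sqr_reps natr_sum.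
  by apply: eq_bigr => t _; rewrite mulr1.
rewrite card_square_sum_tuples_sum mulr_sumr -big_split; apply: ler_sum => y _.
by rewrite /qchar; case: eqP => [->|_]; rewrite ?is_square0 //; case: is_square.
Qed.

Lemma card_square_sum_tuples_ge :
  (16 * #|F| <= #|A| ^ 2)%N -> (#|A| ^ n.+2 <= 4 * #|square_sum_tuples A n.+2|)%N.
Proof.
move=> A_large; rewrite -(ler_nat int) natrM natrX -/N.
have A_large' : 16 * q <= N ^+ 2 by rewrite /q /N -natrX -natrM ler_nat.
have qchar_sum_ge : - N ^+ n.+2 <= 2 * qchar_sqr_sum.
  apply: lerN_sqr; first exact/exprn_ge0/ler0n.
  rewrite exprMn; apply: (@le_trans _ _ (2 ^+ 2 * (4 * q * (N ^+ n.+1) ^+ 2))).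
    by rewrite ler_wpM2l ?qchar_sqr_sum_sqr_le.
  rewrite (exprS N n.+1) exprMn.
  rewrite [X in X <= _](_ : _ = 16 * q * (N ^+ n.+1) ^+ 2); last by ring.
  by rewrite ler_wpM2r ?sqr_ge0.
have := card_square_sum_tuples_ge_qchar; lia.
Qed.

End CharacterSumBound.

Local Open Scope R_scope.

Lemma INR_expn (m k : nat) : INR (m ^ k) = INR m ^ k.
Proof. by elim: k => [|k IHk]; rewrite ?expnS ?mulnE ?mult_INR ?IHk. Qed.

Lemma sqr_le_of_sqrt_le (a b : nat) : 4 * sqrt (INR a) <= INR b -> (16 * a <= b ^ 2)%N.
Proof.
move=> le_ab; apply/ssrnat.leP/INR_le; rewrite mulnE mult_INR INR_expn.
have sqrt_a_ge0 := sqrt_pos (INR a).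
have sqrt_a_sqr := sqrt_sqrt (INR a) (pos_INR a).
rewrite [INR 16]/=; nra.
Qed.

Theorem lemma6p2 (d : nat) (hd : (3 <= d)%N) :
  exists c C : R, 0 < c /\ 0 < C /\
    forall (F : finFieldType) (A : {set F}),
      odd #|F| ->
      c * sqrt (INR #|F|) <= INR #|A| ->
      C * (INR #|A|) ^ d <= INR #|square_sum_tuples A d|.
Proof.
exists 4, (1 / 4); split; [lra | split; [lra |]].
move=> F A oddF /sqr_le_of_sqrt_le A_large.
case: d hd => [|[|n]] // _.
have /ssrnat.leP/le_INR := card_square_sum_tuples_ge n oddF A_large.
rewrite mulnE mult_INR INR_expn [INR 4]/=; lra.
Qed.
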